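(* Let $\mathcal{F}\subseteq\mathcal{O}$ be a normal family of objects and let $(M_p)_{p\in\mathcal{F}}$ be the Voronoi partition of $V(G)$ with respect to $\mathcal{F}$. Then for every $p\in\mathcal{F}$ we have $\mathrm{loc}(p)\subseteq M_p$.
   Context: $G$ is a connected graph with positive edge weights; $\mathrm{dist}(X,Y)$ denotes the minimum weight of a path between a vertex of $X$ and a vertex of $Y$. Each object $p\in\mathcal{O}$ has a location $\mathrm{loc}(p)$, a nonempty vertex set inducing a connected subgraph, and a radius $\mathrm{rad}(p)\ge 0$. A family $\mathcal{F}$ is normal if locations of its members are pairwise disjoint and $\mathrm{dist}(\mathrm{loc}(p_1),\mathrm{loc}(p_2))>\mathrm{rad}(p_1)-\mathrm{rad}(p_2)$ for all ordered pairs of distinct $p_1,p_2\in\mathcal{F}$. Standing assumption: all values $\mathrm{dist}(u,v)$ and $\mathrm{dist}(u,v)-\mathrm{rad}(p)$ ($u,v\in V(G)$, $p\in\mathcal{O}$) are pairwise different and shortest paths are unique, so there are no ties. The Voronoi partition assigns $v\in V(G)$ to $M_{p_0}$ iff $\mathrm{dist}(v,\mathrm{loc}(p_0))-\mathrm{rad}(p_0)$ is the smallest among the values $\mathrm{dist}(v,\mathrm{loc}(p))-\mathrm{rad}(p)$, $p\in\mathcal{F}$. *)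

From mathcomp Require Import all_boot all_order all_algebra.
Set Implicit Arguments. Unset Strict Implicit. Unset Printing Implicit Defensive.
Import Order.TTheory GRing.Theory Num.Theory.
Local Open Scope ring_scope.

Section Defs.
Variables (R : realFieldType) (V : finType).

Definition weighted_graph (e : rel V) (w : V -> V -> R) : Prop :=
  [/\ forall x y, e x y = e y x, forall x, ~~ e x x,
      forall x y, w x y = w y x & forall x y, e x y -> 0 < w x y].

Definition graph_connected (e : rel V) : Prop := forall x y : V, connect e x y.

Definition walk_weight (w : V -> V -> R) (x : V) (p : seq V) : R :=
  \sum_(i <- zip (x :: p) p) w i.1 i.2.

Definition is_setdist (e : rel V) (w : V -> V -> R) (X Y : {set V}) (d : R) : Prop :=
  (exists x p, [/\ x \in X, path e x p, last x p \in Y & walk_weight w x p = d]) /\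
  (forall x p, x \in X -> path e x p -> last x p \in Y -> d <= walk_weight w x p).

Definition induces_connected (e : rel V) (S : {set V}) : Prop :=
  {in S &, forall x y, connect [rel a b | [&& e a b, a \in S & b \in S]] x y}.

Variable O : finType.

Definition objects_ok (e : rel V) (loc : O -> {set V}) (rad : O -> R) : Prop :=
  forall p, [/\ loc p != set0, induces_connected e (loc p) & 0 <= rad p].

(* Normal family, with [D X Y] the set distance dist(X,Y). *)
Definition normal_family (D : {set V} -> {set V} -> R) (loc : O -> {set V})
    (rad : O -> R) (F : {set O}) : Prop :=
  {in F &, forall p1 p2, p1 != p2 ->
     [disjoint loc p1 & loc p2] /\ rad p1 - rad p2 < D (loc p1) (loc p2)}.

Definition voronoi_cell (D : {set V} -> {set V} -> R) (loc : O -> {set V})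
    (rad : O -> R) (F : {set O}) (p0 : O) : {set V} :=
  [set v | [forall p in F, (p != p0) ==>
     (D [set v] (loc p0) - rad p0 < D [set v] (loc p) - rad p)]].
End Defs.

(** A vertex [v] of [loc p] has [dist(v, loc p) = 0], so the Voronoi inequality
    for [v] against another [q] in [F] reads [- rad p < dist(v, loc q) - rad q].
    Since [v] lies in [loc p], the distance [dist(v, loc q)] is at least
    [dist(loc q, loc p)], which normality bounds below strictly by
    [rad q - rad p]. *)

From mathcomp Require Import all_boot all_order all_algebra.
From mathcomp Require Import lra.
Set Implicit Arguments. Unset Strict Implicit. Unset Printing Implicit Defensive.
Import Order.TTheory GRing.Theory Num.Theory.
Local Open Scope ring_scope.

Section WalkWeight.
Variables (R : realFieldType) (V : finType) (w : V -> V -> R).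

Lemma walk_weight_nil x : walk_weight w x [::] = 0.
Proof. by rewrite /walk_weight big_nil. Qed.

Lemma walk_weight_cons x y p :
  walk_weight w x (y :: p) = w x y + walk_weight w y p.
Proof. by rewrite /walk_weight /= big_cons. Qed.

Lemma walk_weight_rcons x p y :
  walk_weight w x (rcons p y) = walk_weight w x p + w (last x p) y.
Proof.
elim: p x => [|z p IHp] x /=.
  by rewrite walk_weight_cons !walk_weight_nil add0r addr0.
by rewrite !walk_weight_cons IHp addrA.
Qed.

Lemma last_rev_belast (x : V) p : last (last x p) (rev (belast x p)) = x.
Proof. by case: p => //= y p; rewrite rev_cons last_rcons. Qed.

Lemma walk_weight_rev (w_sym : forall x y, w x y = w y x) x p :
  walk_weight w (last x p) (rev (belast x p)) = walk_weight w x p.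
Proof.
elim: p x => [|y p IHp] x //=.
by rewrite rev_cons walk_weight_rcons IHp last_rev_belast walk_weight_cons
  addrC w_sym.
Qed.

Lemma walk_weight_ge0 (e : rel V) (w_pos : forall x y, e x y -> 0 < w x y) x p :
  path e x p -> 0 <= walk_weight w x p.
Proof.
elim: p x => [|y p IHp] x /=; first by rewrite walk_weight_nil.
case/andP=> exy /IHp; rewrite walk_weight_cons; apply: addr_ge0.
exact/ltW/w_pos.
Qed.

End WalkWeight.

Section SetDistance.
Variables (R : realFieldType) (V : finType) (e : rel V) (w : V -> V -> R).

Lemma is_setdist_meet0 (w_pos : forall x y, e x y -> 0 < w x y)
    (X Y : {set V}) d x :
  x \in X -> x \in Y -> is_setdist e w X Y d -> d = 0.
Proof.
move=> xX xY [[x0 [p [_ ep _ <-]]] d_min].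
apply/eqP; rewrite eq_le (walk_weight_ge0 w_pos ep) andbT.
by rewrite -(walk_weight_nil w x) d_min.
Qed.

Lemma is_setdist_le_subr (X Y Y' : {set V}) d d' :
  Y \subset Y' -> is_setdist e w X Y d -> is_setdist e w X Y' d' -> d' <= d.
Proof.
move=> /subsetP sYY' [[x [p [xX ep /sYY' pY' <-]]] _] [_ d'_min].
exact: d'_min.
Qed.

Lemma is_setdist_sym (e_sym : forall x y, e x y = e y x)
    (w_sym : forall x y, w x y = w y x) (X Y : {set V}) d :
  is_setdist e w X Y d -> is_setdist e w Y X d.
Proof.
have rev_walk x p : path e (last x p) (rev (belast x p)) = path e x p.
  by rewrite rev_path; apply: eq_path => a b; rewrite e_sym.
move=> [[x [p [xX ep pY <-]]] d_min]; split.
  exists (last x p), (rev (belast x p)).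
  by rewrite rev_walk last_rev_belast walk_weight_rev.
move=> y q yY eyq qX; rewrite -[walk_weight w y q]walk_weight_rev //.
by apply: d_min; rewrite ?rev_walk ?last_rev_belast.
Qed.

End SetDistance.

Theorem lemma4p1 (R : realFieldType) (V : finType) (e : rel V) (w : V -> V -> R)
    (D : {set V} -> {set V} -> R) (O : finType) (loc : O -> {set V}) (rad : O -> R)
    (F : {set O}) :
  weighted_graph e w -> graph_connected e ->
  (forall X Y : {set V}, X != set0 -> Y != set0 -> is_setdist e w X Y (D X Y)) ->
  objects_ok e loc rad ->
  normal_family D loc rad F ->
  forall p, p \in F -> loc p \subset voronoi_cell D loc rad F p.
Proof.
move=> [e_sym _ w_sym w_pos] _ hD objs normF p pF.
apply/subsetP => v vp; rewrite inE; apply/forall_inP => q qF; apply/implyP => qp.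
have v_ne0 : [set v] != set0 by apply/set0Pn; exists v; rewrite set11.
have [p_ne0 _ _] := objs p; have [q_ne0 _ _] := objs q.
have D_vp : D [set v] (loc p) = 0.
  by apply: (is_setdist_meet0 w_pos (set11 v) vp); apply: hD.
have D_qp_le : D (loc q) (loc p) <= D [set v] (loc q).
  have v_sub_p : [set v] \subset loc p by rewrite sub1set.
  apply: (is_setdist_le_subr v_sub_p _ (hD _ _ q_ne0 p_ne0)).
  exact/is_setdist_sym/hD.
have [_ D_qp_gt] := normF q p qF pF qp.
rewrite D_vp; lra.
Qed.
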